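(* Let $R\subset S$ be an integral ring extension that has FIP. Then $R\subset S$ is seminormal if and only if the conductor $(R:S)$ is a semiprime (i.e. radical) ideal of $S$.
   Context: Rings are commutative with identity. $(R:S)=\{r\in R\mid rS\subseteq R\}$. The extension has FIP if the set $[R,S]$ of $R$-subalgebras of $S$ is finite. $R\subseteq S$ is seminormal if for $b\in S$, $b^2,b^3\in R$ implies $b\in R$. *)

From HB Require Import structures.
From mathcomp Require Import all_boot all_order all_algebra.
Set Implicit Arguments. Unset Strict Implicit. Unset Printing Implicit Defensive.
Import Order.TTheory GRing.Theory Num.Theory.
Local Open Scope ring_scope.

(* A ring extension R ⊆ S is modelled by a commutative ring S together with a
   subring R of S, given as a boolean predicate closed under the ring
   operations (1, subtraction, multiplication). *)

Section Defs.
Variable S : comNzRingType.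

Definition integral_over (R : {pred S}) (s : S) : Prop :=
  exists p : {poly S}, [/\ p \is monic, p \is a polyOver R & root p s].

Definition integral_ext (R : {pred S}) : Prop :=
  forall s : S, integral_over R s.

Definition intermediate_ring (R T : {pred S}) : Prop :=
  subring_closed T /\ {subset R <= T}.

(* FIP: the set [R,S] of R-subalgebras of S is finite *)
Definition FIP (R : {pred S}) : Prop :=
  exists (n : nat) (f : nat -> {pred S}),
    forall T : {pred S}, intermediate_ring R T ->
      exists2 i, (i < n)%N & T =i f i.

Definition seminormal (R : {pred S}) : Prop :=
  forall b : S, b ^+ 2 \in R -> b ^+ 3 \in R -> b \in R.

(* the conductor (R:S) = {r ∈ R | r S ⊆ R} (note r = r*1 ∈ R automatically) *)
Definition conductor (R : {pred S}) (x : S) : Prop :=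
  x \in R /\ forall s : S, x * s \in R.

Definition is_ideal (I : S -> Prop) : Prop :=
  [/\ I 0, (forall x y, I x -> I y -> I (x + y)) & (forall s x, I x -> I (s * x))].

Definition semiprime_ideal (I : S -> Prop) : Prop :=
  is_ideal I /\ forall (x : S) (n : nat), I (x ^+ n.+1) -> I x.

End Defs.

From HB Require Import structures.
From mathcomp Require Import all_boot all_order all_algebra.
From mathcomp Require Import perm ring zify.
From Stdlib Require Import Classical ClassicalEpsilon.
Import GRing.Theory.
Local Open Scope ring_scope.
Set Implicit Arguments.
Unset Strict Implicit.

(* Seminormality makes the conductor radical: if x^(k+2) S is in R then, for
   every t, (x^(k+1) t)^2 and (x^(k+1) t)^3 lie in R, hence so does x^(k+1) t.

   Conversely let b^2, b^3 be in R and a := b^2.  Integrality and FIP make S a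
   finitely generated R-module: otherwise adjoining, again and again, an element
   outside the current finitely spanned subring (with its powers up to the
   degree of an integral equation) gives infinitely many intermediate rings.
   The intermediate rings R + a^m S cannot all be distinct, so a^i S is
   contained in R + a^(i+1) S for some i, and the determinant trick yields r in
   R with a^i (1 + a r) in the conductor.  The conductor being radical,
   a (1 + a r) and then b (1 + a r) lie in it, and b = b (1 + a r) - b^3 r. *)

Definition asbool (P : Prop) : bool :=
  if excluded_middle_informative P then true else false.

Lemma asboolP (P : Prop) : reflect P (asbool P).
Proof. by rewrite /asbool; case: excluded_middle_informative => h; constructor. Qed.

Section Conductor.
Variables (S : comNzRingType) (R : {pred S}).
Hypothesis subringR : subring_closed R.
HB.instance Definition _ := GRing.isSubringClosed.Build S R subringR.

Lemma conductor_ideal : is_ideal (conductor R).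
Proof.
split.
- by split=> [|s]; rewrite ?mul0r rpred0.
- move=> x y [Rx xS] [Ry yS]; split=> [|s]; first exact: rpredD.
  by rewrite mulrDl rpredD.
- move=> s x [_ xS]; split=> [|t]; first by rewrite mulrC xS.
  by rewrite [s * x]mulrC -mulrA xS.
Qed.

Lemma seminormal_conductor_semiprime :
  seminormal R -> semiprime_ideal (conductor R).
Proof.
move=> snR; split; first exact: conductor_ideal.
have conductor_pow_pred x k : conductor R (x ^+ k.+2) -> conductor R (x ^+ k.+1).
  move=> [_ xS]; suff xS' t : x ^+ k.+1 * t \in R.
    by split=> //; rewrite -(mulr1 (x ^+ k.+1)).
  apply: snR.
  + have -> : (x ^+ k.+1 * t) ^+ 2 = x ^+ k.+2 * (x ^+ k * t ^+ 2).
      by rewrite !exprS; ring.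
    exact: xS.
  + have -> : (x ^+ k.+1 * t) ^+ 3 = x ^+ k.+2 * (x ^+ (2 * k).+1 * t ^+ 3).
      by rewrite exprMn -exprM mulrA -exprD; congr (x ^+ _ * _); lia.
    exact: xS.
move=> x; elim=> [|n IHn]; first by rewrite expr1.
by move/conductor_pow_pred/IHn.
Qed.

Fixpoint rspan (W : seq S) (x : S) : Prop :=
  if W is w :: W' then exists2 c, c \in R & rspan W' (x - c * w) else x = 0.

Lemma rspan0 W : rspan W 0.
Proof. by elim: W => [|w W IHW] //=; exists 0; rewrite ?mul0r ?subr0 ?rpred0. Qed.

Lemma rspanD W x y : rspan W x -> rspan W y -> rspan W (x + y).
Proof.
elim: W x y => [|w W IHW] x y /=; first by move=> -> ->; rewrite addr0.
move=> [c Rc Wx] [d Rd Wy]; exists (c + d); first exact: rpredD.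
have -> : x + y - (c + d) * w = (x - c * w) + (y - d * w) by ring.
exact: IHW.
Qed.

Lemma rspanZ W r x : r \in R -> rspan W x -> rspan W (r * x).
Proof.
elim: W x => [|w W IHW] x Rr /=; first by move=> ->; rewrite mulr0.
move=> [c Rc Wx]; exists (r * c); first exact: rpredM.
have -> : r * x - r * c * w = r * (x - c * w) by ring.
exact: IHW.
Qed.

Lemma rspanN W x : rspan W x -> rspan W (- x).
Proof. by rewrite -mulN1r; apply: rspanZ; rewrite rpredN rpred1. Qed.

Lemma rspan_sum W I (r : seq I) (P : pred I) (F : I -> S) :
  (forall i, P i -> rspan W (F i)) -> rspan W (\sum_(i <- r | P i) F i).
Proof. by apply: big_ind; [apply: rspan0 | apply: rspanD]. Qed.

Lemma mem_rspan W w : w \in W -> rspan W w.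
Proof.
elim: W => [|v W IHW] //=; rewrite in_cons => /predU1P [->|Ww].
  by exists 1; rewrite ?rpred1 // mul1r subrr; apply: rspan0.
by exists 0; rewrite ?rpred0 // mul0r subr0; apply: IHW.
Qed.

Lemma rspan_trans W V x :
  rspan W x -> (forall w, w \in W -> rspan V w) -> rspan V x.
Proof.
elim: W x => [|w W IHW] x /=; first by move=> -> _; apply: rspan0.
move=> [c Rc Wx] WV; rewrite -(subrK (c * w) x); apply: rspanD.
  by apply: IHW => // v Wv; apply: WV; rewrite in_cons Wv orbT.
by apply: rspanZ => //; apply: WV; apply: mem_head.
Qed.

Lemma rspan_mull W w x : rspan W x -> rspan [seq w * v | v <- W] (w * x).
Proof.
elim: W x => [|v W IHW] x /=; first by move=> ->; rewrite mulr0.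
move=> [c Rc Wx]; exists c => //.
have -> : w * x - c * (w * v) = w * (x - c * v) by ring.
exact: IHW.
Qed.

Lemma rspan_allpairs W V x y : rspan W x -> rspan V y ->
  rspan [seq w * v | w <- W, v <- V] (x * y).
Proof.
move=> Wx Vy; apply: (rspan_trans (rspan_mull x Vy)) => _ /mapP [v Vv ->].
rewrite mulrC; apply: (rspan_trans (rspan_mull v Wx)) => _ /mapP [w Ww ->].
by apply: mem_rspan; rewrite mulrC; apply/allpairsP; exists (w, v).
Qed.

Definition rspan_ring (W : seq S) : Prop :=
  rspan W 1 /\ forall w1 w2, w1 \in W -> w2 \in W -> rspan W (w1 * w2).

Lemma rspan_ringM W x y :
  rspan_ring W -> rspan W x -> rspan W y -> rspan W (x * y).
Proof.
move=> [_ WM] Wx Wy; apply: (rspan_trans (rspan_allpairs Wx Wy)).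
by move=> _ /allpairsP [[w v] [Ww Wv ->]]; apply: WM.
Qed.

Definition rspan_pred (W : seq S) : {pred S} := fun x => asbool (rspan W x).

Lemma rspan_predP W x : reflect (rspan W x) (x \in rspan_pred W).
Proof. exact: asboolP. Qed.

Lemma rspan_intermediate W : rspan_ring W -> intermediate_ring R (rspan_pred W).
Proof.
move=> ringW; have [W1 _] := ringW; split; last first.
  by move=> r Rr; apply/rspan_predP; rewrite -(mulr1 r); apply: rspanZ.
split; first exact/rspan_predP.
- move=> x y /rspan_predP Wx /rspan_predP Wy.
  by apply/rspan_predP; apply/rspanD/rspanN.
- move=> x y /rspan_predP Wx /rspan_predP Wy.
  by apply/rspan_predP; apply: rspan_ringM.
Qed.

Definition powers (s : S) (d : nat) : seq S := [seq s ^+ k | k <- iota 0 d].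

Lemma integral_powers_rspan s :
  integral_over R s -> exists d, forall m, rspan (powers s d) (s ^+ m).
Proof.
move=> [p [monic_p /polyOverP Rp /rootP ps0]]; exists (size p).-1.
set d := (size p).-1; have size_p : size p = d.+1.
  by rewrite prednK // lt0n size_poly_eq0 monic_neq0.
have sd : s ^+ d = - \sum_(i < d) p`_i * s ^+ i.
  move: ps0; rewrite horner_coef size_p big_ord_recr /=.
  have -> : p`_d = 1 by move/monicP: monic_p; rewrite lead_coefE size_p.
  by rewrite mul1r => /eqP; rewrite addrC addr_eq0 => /eqP.
elim/ltn_ind => m IHm; have [lt_md | le_dm] := ltnP m d.
  by apply: mem_rspan; apply: map_f; rewrite mem_iota.
have -> : s ^+ m = - \sum_(i < d) p`_i * s ^+ (m - d + i).
  rewrite -(subnK le_dm) exprD sd mulrN big_distrr /= addnK; congr (- _).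
  by apply: eq_bigr => i _; rewrite exprD; ring.
apply/rspanN/rspan_sum => i _; apply: rspanZ => //.
by apply: IHm; have := ltn_ord i; lia.
Qed.

Definition adjoin_powers (W : seq S) (s : S) (d : nat) : seq S :=
  [seq w * v | w <- W, v <- powers s d].

Lemma rspan_ring_adjoin W s d :
  rspan_ring W -> (forall m, rspan (powers s d) (s ^+ m)) ->
  [/\ rspan_ring (adjoin_powers W s d), rspan (adjoin_powers W s d) s
    & forall x, rspan W x -> rspan (adjoin_powers W s d) x].
Proof.
move=> [W1 WM] sd; split.
- split; first by rewrite -(mulr1 1) -{2}(expr0 s); apply: rspan_allpairs.
  move=> z1 z2 /allpairsP [[w1 v1] [Ww1 /mapP [i _ ->] ->]].
  move=> /allpairsP [[w2 v2] [Ww2 /mapP [j _ ->] ->]] /=.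
  have -> : w1 * s ^+ i * (w2 * s ^+ j) = (w1 * w2) * s ^+ (i + j).
    by rewrite exprD; ring.
  by apply: rspan_allpairs; [apply: WM | apply: sd].
- by rewrite -[X in rspan _ X]mul1r -[X in rspan _ (_ * X)]expr1; apply: rspan_allpairs.
- by move=> x Wx; rewrite -(mulr1 x) -(expr0 s); apply: rspan_allpairs.
Qed.

Lemma FIP_chain_repeats (P : nat -> {pred S}) :
  FIP R -> (forall m, intermediate_ring R (P m)) ->
  exists i j, (i < j)%N /\ P i =i P j.
Proof.
move=> [n [f fP]] intP.
have [g gP] : exists g : nat -> nat, forall m, (g m < n)%N /\ P m =i f (g m).
  apply: (choice (fun m i => (i < n)%N /\ P m =i f i)) => m.
  by have [i lt_in Pf] := fP _ (intP m); exists i.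
have : ~~ uniq [seq g m | m <- iota 0 n.+1].
  apply/negP => /(@uniq_leq_size _ _ (iota 0 n)) le_size.
  have /le_size : {subset [seq g m | m <- iota 0 n.+1] <= iota 0 n}.
    by move=> _ /mapP [m _ ->]; rewrite mem_iota (gP m).1.
  by rewrite size_map !size_iota ltnn.
move/(uniqPn 0%N) => [i [j [lt_ij]]]; rewrite size_map size_iota => lt_jn.
rewrite !(nth_map 0%N) ?size_iota ?nth_iota ?(ltn_trans lt_ij) // !add0n => gij.
by exists i, j; split=> // x; rewrite (gP i).2 (gP j).2 gij.
Qed.

Lemma integral_FIP_rspan_finite :
  integral_ext R -> FIP R -> exists W, forall s, rspan W s.
Proof.
move=> intR fipR; apply: NNPP => no_span.
have [deg degP] : exists deg : S -> nat,
    forall s m, rspan (powers s (deg s)) (s ^+ m).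
  apply: (choice (fun s d => forall m, rspan (powers s d) (s ^+ m))) => s.
  exact: integral_powers_rspan.
have [out outP] : exists out : seq S -> S,
    forall W, rspan_ring W -> ~ rspan W (out W).
  apply: (choice (fun W s => rspan_ring W -> ~ rspan W s)) => W.
  apply: NNPP => all_span.
  apply: no_span; exists W => s; apply: NNPP => Ws.
  by apply: all_span; exists s.
pose grow W := adjoin_powers W (out W) (deg (out W)).
pose Ws m := iter m grow [:: 1].
have ringWs m : rspan_ring (Ws m).
  elim: m => [|m IHm].
    split=> [|w1 w2]; first by apply: mem_rspan; apply: mem_head.
    rewrite !inE => /eqP-> /eqP->; rewrite mulr1.
    by apply: mem_rspan; apply: mem_head.
  by have [] := rspan_ring_adjoin IHm (degP (out (Ws m))).
have WsS m :
    rspan (Ws m.+1) (out (Ws m)) /\ forall x, rspan (Ws m) x -> rspan (Ws m.+1) x.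
  by have [] := rspan_ring_adjoin (ringWs m) (degP (out (Ws m))).
have Ws_mono i j x : (i <= j)%N -> rspan (Ws i) x -> rspan (Ws j) x.
  move/subnKC <-; elim: (j - i)%N => [|k IHk] Wix; first by rewrite addn0.
  by rewrite addnS; apply: (WsS _).2; apply: IHk.
have [i [j [lt_ij eq_ij]]] :=
  FIP_chain_repeats fipR (fun m => rspan_intermediate (ringWs m)).
apply: (outP _ (ringWs i)); apply/rspan_predP; rewrite eq_ij; apply/rspan_predP.
exact: Ws_mono lt_ij (WsS i).1.
Qed.

Lemma rspan_coef W x : rspan W x ->
  exists2 cs : seq S, forall i, cs`_i \in R & x = \sum_(i < size W) cs`_i * W`_i.
Proof.
elim: W x => [|w W IHW] x /=.
  by move=> ->; exists [::] => [i|]; rewrite ?nth_nil ?rpred0 ?big_ord0.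
move=> [c Rc /IHW [cs Rcs xE]]; exists (c :: cs) => [[|i] //=|].
by rewrite big_ord_recl /= -xE subrKC.
Qed.

Lemma det_mxOver k (M : 'M[S]_k) : M \is a mxOver R -> \det M \in R.
Proof.
move/mxOverP=> RM; rewrite /determinant.
apply: rpred_sum => s _; rewrite rpredM ?rpredX ?rpredN ?rpred1 //.
by apply: rpred_prod => i _; apply: RM.
Qed.

Lemma adj_mxOver k (M : 'M[S]_k) : M \is a mxOver R -> \adj M \is a mxOver R.
Proof.
move/mxOverP=> RM; apply/mxOverP => i j; rewrite mxE rpredM ?rpredX ?rpredN ?rpred1 //.
by apply: det_mxOver; apply/mxOverP => i' j'; rewrite !mxE RM.
Qed.

Lemma det_scale_mxOver k (A : 'M[S]_k) (v : 'cV[S]_k) :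
  A \is a mxOver R -> A *m v \is a mxOver R -> \det A *: v \is a mxOver R.
Proof.
move=> RA RAv; rewrite -mul_scalar_mx -mul_adj_mx -mulmxA.
by apply: mxOverM => //; apply: adj_mxOver.
Qed.

Lemma det_one_subZ k a (C : 'M[S]_k) : a \in R -> C \is a mxOver R ->
  exists2 r, r \in R & \det (1%:M - a *: C) = 1 + a * r.
Proof.
move=> Ra /mxOverP RC.
pose cong x y := y \in R /\ exists2 r, r \in R & x = y + a * r.
have congD x1 y1 x2 y2 : cong x1 y1 -> cong x2 y2 -> cong (x1 + x2) (y1 + y2).
  move=> [Ry1 [r1 Rr1 ->]] [Ry2 [r2 Rr2 ->]]; split; first exact: rpredD.
  by exists (r1 + r2); [apply: rpredD | ring].
have congM x1 y1 x2 y2 : cong x1 y1 -> cong x2 y2 -> cong (x1 * x2) (y1 * y2).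
  move=> [Ry1 [r1 Rr1 ->]] [Ry2 [r2 Rr2 ->]]; split; first exact: rpredM.
  exists (r1 * y2 + y1 * r2 + a * r1 * r2); last by ring.
  by rewrite !rpredD ?rpredM.
have congR y : y \in R -> cong y y.
  by move=> Ry; split=> //; exists 0; rewrite ?rpred0 ?mulr0 ?addr0.
suff [_ [r Rr ->]] : cong (\det (1%:M - a *: C)) (\det (1%:M : 'M[S]_k)).
  by exists r; rewrite ?det1.
apply: (big_ind2 cong) => [||s _]; [exact/congR/rpred0 | exact: (congD) |].
apply: (congM); first by apply/congR; rewrite rpredX ?rpredN ?rpred1.
apply: (big_ind2 cong) => [||i _]; [exact/congR/rpred1 | exact: congM |].
rewrite !mxE; split; first by case: (_ == _); rewrite ?rpred1 ?rpred0.
by exists (- C i (s i)); [rewrite rpredN | ring].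
Qed.

Lemma conductor_of_stable W a c :
  (forall s, rspan W s) -> a \in R ->
  (forall s, exists2 r, r \in R & exists s', c * s = r + a * c * s') ->
  exists2 r, r \in R & conductor R (c * (1 + a * r)).
Proof.
move=> spanW Ra stable; pose k := size W.
have stableW (j : 'I_k) : exists p : S * seq S, [/\ p.1 \in R,
    forall l, p.2`_l \in R & c * W`_j = p.1 + a * c * \sum_(l < k) p.2`_l * W`_l].
  have [r Rr [s' ->]] := stable W`_j.
  by have [cs Rcs ->] := rspan_coef (spanW s'); exists (r, cs).
have [F FP] := fin_all_exists stableW.
pose C : 'M[S]_k := \matrix_(j, l) (F j).2`_l.
pose v : 'cV[S]_k := \col_j (c * W`_j).
have RC : C \is a mxOver R by apply/mxOverP => i j; rewrite mxE; have [] := FP i.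
have [r Rr detA] := det_one_subZ Ra RC; exists r => //.
have Rv : (1 + a * r) *: v \is a mxOver R.
  rewrite -detA; apply: det_scale_mxOver.
    by rewrite rpredB ?rpred1 ?mxOverZ.
  apply/mxOverP => j l; rewrite ord1 mulmxBl mul1mx -scalemxAl !mxE.
  have -> : a * \sum_l C j l * v l 0 = a * c * \sum_(l < k) (F j).2`_l * W`_l.
    by rewrite -mulrA !mulr_sumr; apply: eq_bigr => l' _; rewrite !mxE; ring.
  by have [Rj _ ->] := FP j; rewrite addrK.
have RuW (j : 'I_k) : c * (1 + a * r) * W`_j \in R.
  by move/mxOverP: Rv => /(_ j 0); rewrite !mxE mulrCA mulrA.
suff RcuS s : c * (1 + a * r) * s \in R by split; rewrite // -[X in X \in R]mulr1.
have [cs Rcs ->] := rspan_coef (spanW s); rewrite mulr_sumr.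
by apply: rpred_sum => l _; rewrite mulrCA rpredM.
Qed.

Definition R_add_mulS (c : S) : {pred S} :=
  fun x => asbool (exists2 r, r \in R & exists s, x = r + c * s).

Lemma R_add_mulSP c x :
  reflect (exists2 r, r \in R & exists s, x = r + c * s) (x \in R_add_mulS c).
Proof. exact: asboolP. Qed.

Lemma R_add_mulS_intermediate c : intermediate_ring R (R_add_mulS c).
Proof.
split; last first.
  by move=> r Rr; apply/R_add_mulSP; exists r => //; exists 0; rewrite mulr0 addr0.
split.
- by apply/R_add_mulSP; exists 1; rewrite ?rpred1 //; exists 0; rewrite mulr0 addr0.
- move=> _ _ /R_add_mulSP [r Rr [s ->]] /R_add_mulSP [r' Rr' [s' ->]].
  by apply/R_add_mulSP; exists (r - r'); [apply: rpredB | exists (s - s'); ring].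
- move=> _ _ /R_add_mulSP [r Rr [s ->]] /R_add_mulSP [r' Rr' [s' ->]].
  apply/R_add_mulSP; exists (r * r'); first exact: rpredM.
  by exists (r * s' + s * r' + c * s * s'); ring.
Qed.

Lemma conductor_semiprime_seminormal W :
  FIP R -> (forall s, rspan W s) -> semiprime_ideal (conductor R) -> seminormal R.
Proof.
move=> fipR spanW [[_ _ conductorM] conductor_rad] b Rb2 Rb3; pose a := b ^+ 2.
have [i [j [lt_ij eq_ij]]] :=
  FIP_chain_repeats fipR (fun m => R_add_mulS_intermediate (a ^+ m)).
have stable s : exists2 r, r \in R & exists s', a ^+ i * s = r + a * a ^+ i * s'.
  have /R_add_mulSP [r Rr [s' ->]] : a ^+ i * s \in R_add_mulS (a ^+ j).
    rewrite -eq_ij; apply/R_add_mulSP.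
    by exists 0; rewrite ?rpred0 //; exists s; rewrite add0r.
  exists r => //; exists (a ^+ (j - i.+1) * s').
  by rewrite mulrA -exprS -exprD subnKC.
have [r Rr conductor_u] := conductor_of_stable spanW Rb2 stable.
pose u := 1 + a * r.
have conductor_au : conductor R (a * u).
  apply: (conductor_rad _ i).
  have -> : (a * u) ^+ i.+1 = (a * u ^+ i) * (a ^+ i * u) by rewrite exprMn !exprS; ring.
  exact: conductorM.
have [Rbu _] : conductor R (b * u).
  apply: (conductor_rad _ 1%N).
  have -> : (b * u) ^+ 2 = u * (a * u) by rewrite /a; ring.
  exact: conductorM.
have -> : b = b * u - b ^+ 3 * r by rewrite /u /a; ring.
by rewrite rpredB // rpredM.
Qed.

End Conductor.

Theorem proposition3p2 (S : comNzRingType) (R : {pred S}) :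
  subring_closed R -> integral_ext R -> FIP R ->
  (seminormal R <-> semiprime_ideal (conductor R)).
Proof.
move=> subringR intR fipR; split; first exact: seminormal_conductor_semiprime.
have [W spanW] := integral_FIP_rspan_finite subringR intR fipR.
exact: conductor_semiprime_seminormal spanW.
Qed.
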